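(* Let $H:\mathbb{R}^{2m}\to\mathbb{R}$ be smooth and let $\bar y\in\mathbb{R}^{2m}$ be such that $F'=SH_{yy}(\bar y)$ is invertible. Consider the scheme $$y_{n+1}-y_n=\theta_n\,S\,\bar\nabla_sH(y_n,y_{n+1}),\qquad \theta_n=2(F')^{-1}\tanh\frac{h_nF'}{2}.$$ This scheme preserves the energy exactly: $H(y_{n+1})=H(y_n)$.
   Context: Notation: - $y=(x,p)\in\mathbb{R}^{2m}$, $y_n=(x_n,p_n)$, and $h_n$ is the time step. - $S=\begin{pmatrix}0&1\\-1&0\end{pmatrix}$ with $m\times m$ blocks. - $H_{yy}$ is the Hessian of $H$, so $F'=\begin{pmatrix}H_{px}&H_{pp}\\ -H_{xx}&-H_{xp}\end{pmatrix}$ at $\bar y$. $\bar\nabla_sH(y_n,y_{n+1})=\tfrac12\big(\bar\nabla H(y_n,y_{n+1})+\bar\nabla H(y_{n+1},y_n)\big)$ is the symmetrized coordinate increment discrete gradient, where $\bar\nabla H$ has components $$\frac{\Delta H}{\Delta y^j}=\frac{H(\hat y^j_n)-H(\hat y^{j-1}_n)}{y^j_{n+1}-y^j_n},\qquad \hat y^j_n=(y^1_{n+1},\dots,y^j_{n+1},y^{j+1}_n,\dots,y^{2m}_n),$$ with the partial derivative as limit when $y^j_{n+1}=y^j_n$. *)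

From mathcomp Require Import all_boot all_order all_algebra.
From mathcomp Require Import all_classical all_reals all_analysis.
Set Implicit Arguments. Unset Strict Implicit. Unset Printing Implicit Defensive.
Import GRing.Theory Num.Theory.
Local Open Scope ring_scope.

Section Defs.
Variable R : realType.

Definition expmx (n : nat) (X : 'M[R]_n) : 'M[R]_n :=
  limn (series (fun k : nat => (k`!%:R)^-1 *: X ^+ k)).

Definition sinhmx (n : nat) (X : 'M[R]_n) : 'M[R]_n :=
  2^-1 *: (expmx X - expmx (- X)).
Definition coshmx (n : nat) (X : 'M[R]_n) : 'M[R]_n :=
  2^-1 *: (expmx X + expmx (- X)).
(* Matrix tanh = sinh X * (cosh X)^{-1}; meaningful when cosh X is invertible. *)
Definition tanhmx (n : nat) (X : 'M[R]_n) : 'M[R]_n :=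
  sinhmx X *m invmx (coshmx X).

Definition basis_vec (n : nat) (j : 'I_n) : 'cV[R]_n := delta_mx j 0.

Fixpoint dderiv (n : nat) (vs : seq 'cV[R]_n) (f : 'cV[R]_n -> R)
  : 'cV[R]_n -> R :=
  match vs with
  | [::] => f
  | v :: vs' => fun x => 'D_v (dderiv vs' f) x
  end.

Definition smooth (n : nat) (f : 'cV[R]_n -> R) : Prop :=
  forall (vs : seq 'cV[R]_n) x, differentiable (dderiv vs f) x.

Definition hessian (n : nat) (f : 'cV[R]_n -> R) (x : 'cV[R]_n) : 'M[R]_n :=
  \matrix_(i, j) 'D_(basis_vec i) ('D_(basis_vec j) f) x.

Definition Smx (m : nat) : 'M[R]_(m + m) :=
  block_mx 0 1%:M (- 1%:M) 0.

Definition Fprime (m : nat) (H : 'cV[R]_(m + m) -> R) (ybar : 'cV[R]_(m + m))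
  : 'M[R]_(m + m) := Smx m *m hessian H ybar.

Definition theta (m : nat) (H : 'cV[R]_(m + m) -> R) (ybar : 'cV[R]_(m + m))
  (h : R) : 'M[R]_(m + m) :=
  2%:R *: (invmx (Fprime H ybar) *m tanhmx ((h / 2) *: Fprime H ybar)).

(* hat y^j (0-indexed j): coordinates 0..j from y', the others from y.
   hat y^{j-1}: coordinates 0..j-1 from y', the others from y. *)
Definition yhat (n : nat) (y y' : 'cV[R]_n) (j : 'I_n) : 'cV[R]_n :=
  \col_i (if (i <= j)%N then y' i 0 else y i 0).
Definition yhat_prev (n : nat) (y y' : 'cV[R]_n) (j : 'I_n) : 'cV[R]_n :=
  \col_i (if (i < j)%N then y' i 0 else y i 0).

Definition coord_dgrad (n : nat) (f : 'cV[R]_n -> R) (y y' : 'cV[R]_n)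
  : 'cV[R]_n :=
  \col_j (if y' j 0 != y j 0 then
            (f (yhat y y' j) - f (yhat_prev y y' j)) / (y' j 0 - y j 0)
          else 'D_(basis_vec j) f (yhat_prev y y' j)).

Definition sym_dgrad (n : nat) (f : 'cV[R]_n -> R) (y y' : 'cV[R]_n)
  : 'cV[R]_n :=
  2^-1 *: (coord_dgrad f y y' + coord_dgrad f y' y).

End Defs.

From HB Require Import structures.
From mathcomp Require Import all_boot all_order all_algebra.
From mathcomp Require Import all_classical all_reals all_analysis.
From mathcomp Require Import ring lra.
Import Order.TTheory GRing.Theory Num.Theory.
Import numFieldNormedType.Exports.

(* The symmetrized coordinate increment discrete gradient [g] satisfies
   [g . (y' - y) = H y' - H y]: along the path from [y] to [y'] that changes one
   coordinate at a time, the coordinate increments telescope.  Hence the scheme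
   gives [H y' - H y = g . (theta S g)], which vanishes because [theta S] is
   skew-symmetric.  Indeed [theta = 2 phi(F')] with [phi(F) = F^-1 tanh (c F)],
   and [phi] is even and commutes with transposition and with conjugation.  As
   [H_yy] is symmetric (Schwarz) and [S^-1 = -S = S^T], we get
   [F'^T = S^-1 (-F') S], so [phi(F')^T = S^-1 phi(F') S] and
   [(phi(F') S)^T = S^T S^-1 phi(F') S = - phi(F') S].
   No invertibility hypothesis is needed: [invmx] is the identity on singular
   matrices and every identity used above also holds there. *)

Local Open Scope ring_scope.

(* Matrices are complete and normed in the library, but the joint structure
   [completeNormedModType] is not inferred without this declaration. *)
HB.instance Definition _ (R : realType) (m n : nat) := Complete.on 'M[R]_(m, n).

Section MatrixNorm.
Context {R : realType}.

Lemma mx_entry_norm_le {a b : nat} (M : 'M[R]_(a, b)) i j : `|M i j| <= `|M|.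
Proof. by rewrite [leRHS]/Num.Def.normr/= mx_normrE; exact: (le_bigmax _ _ (i, j)). Qed.

Lemma mx_norm_le {a b : nat} (M : 'M[R]_(a, b)) (e : R) :
  0 <= e -> (forall i j, `|M i j| <= e) -> `|M| <= e.
Proof.
move=> e0 Me; rewrite [leLHS]/Num.Def.normr/= mx_normrE.
by apply: bigmax_le => // -[i j] _; exact: Me.
Qed.

Lemma mx_norm_linear_le {a b c d : nat} (f : {linear 'M[R]_(a, b) -> 'M[R]_(c, d)}) M :
  `|f M| <= (\sum_(i < a) \sum_(j < b) `|f (delta_mx i j)|) * `|M|.
Proof.
rewrite {1}(matrix_sum_delta M) linear_sum/= (le_trans (ler_norm_sum _ _ _))//.
rewrite mulr_suml; apply: ler_sum => i _.
rewrite linear_sum/= (le_trans (ler_norm_sum _ _ _))// mulr_suml.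
apply: ler_sum => j _; rewrite linearZ/= normrZ mulrC.
by rewrite ler_wpM2l ?mx_entry_norm_le.
Qed.

Lemma mx_linear_continuous {a b c d : nat} (f : {linear 'M[R]_(a, b) -> 'M[R]_(c, d)}) :
  continuous f.
Proof.
apply/bounded_linear_continuous/linear_boundedP.
pose K := \sum_(i < a) \sum_(j < b) `|f (delta_mx i j)|.
apply: filterS (nbhs_pinfty_ge (num_real K)) => r Kr M.
by apply: le_trans (mx_norm_linear_le f M) _; rewrite// ler_wpM2r.
Qed.

Lemma mx_linear_lim {a b c d : nat} (f : {linear 'M[R]_(a, b) -> 'M[R]_(c, d)})
  {u : nat -> 'M[R]_(a, b)} : cvgn u -> limn (f \o u) = f (limn u).
Proof.
move=> cu; apply: cvg_lim => //.
by apply: continuous_cvg => //; exact: mx_linear_continuous.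
Qed.

Lemma mx_norm_mulmx_le {a b c : nat} (A : 'M[R]_(a, b)) (B : 'M[R]_(b, c)) :
  `|A *m B| <= b%:R * `|A| * `|B|.
Proof.
apply: mx_norm_le; first by rewrite !mulr_ge0.
move=> i j; rewrite mxE (le_trans (ler_norm_sum _ _ _))//.
rewrite -mulrA -[b in b%:R]card_ord -sumr_const big_distrl/=.
by apply: ler_sum => k _; rewrite mul1r normrM ler_pM ?mx_entry_norm_le.
Qed.

Lemma mx_norm_exp_le {n : nat} (X : 'M[R]_n) k : `|X ^+ k| <= (n%:R * `|X|) ^+ k.
Proof.
elim: k => [|k IH].
  by rewrite expr0 mx_norm_le// => i j; rewrite mxE; case: (_ == _); rewrite ?normr1 ?normr0.
rewrite !exprSr (le_trans (mx_norm_mulmx_le _ _))// mulrAC mulrC.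
by rewrite ler_pM ?mulr_ge0.
Qed.

End MatrixNorm.

Section MatrixExponential.
Variables (R : realType) (n : nat).
Implicit Types X Y G A B : 'M[R]_n.

Lemma is_cvg_expmx X : cvgn (series (fun k : nat => (k`!%:R)^-1 *: X ^+ k)).
Proof.
apply: (@normed_cvg R 'M[R]_n).
apply: (series_le_cvg _ _ _ (is_cvg_series_exp_coeff (n%:R * `|X|))) => //.
- by move=> k /=.
- by move=> k; rewrite /exp_coeff divr_ge0 ?exprn_ge0 ?mulr_ge0.
- move=> k /=; rewrite /exp_coeff normrZ ger0_norm ?invr_ge0// mulrC.
  by rewrite ler_pM ?invr_ge0 ?mx_norm_exp_le.
Qed.

Lemma linear_expmx (f : {linear 'M[R]_n -> 'M[R]_n}) X :
  f (expmx X) = limn (series (fun k : nat => (k`!%:R)^-1 *: f (X ^+ k))).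
Proof.
rewrite /expmx -(mx_linear_lim f (is_cvg_expmx X)); congr (limn _).
apply/funext => k; rewrite /series /= linear_sum.
by apply: eq_bigr => i _; rewrite linearZ.
Qed.

Lemma expmx_linear_morph (f : {linear 'M[R]_n -> 'M[R]_n}) X Y :
  (forall k, f (X ^+ k) = Y ^+ k) -> f (expmx X) = expmx Y.
Proof.
move=> fXY; rewrite linear_expmx /expmx.
by congr (limn (series _)); apply/funext => k; rewrite fXY.
Qed.

Lemma trmx_expmx X : (expmx X)^T = expmx X^T.
Proof.
apply: (expmx_linear_morph (trmx : {linear 'M[R]_n -> 'M[R]_n})) => k /=.
elim: k => [|k IH]; first by rewrite !expr0 trmx1.
by rewrite exprSr exprS -mulmxE trmx_mul IH mulmxE.
Qed.

Lemma comm_expmx {G X} : G *m X = X *m G -> G *m expmx X = expmx X *m G.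
Proof.
move=> GX; rewrite -[expmx X *m G]/(mulmxr G (expmx X)) !linear_expmx /=.
congr (limn (series _)); apply/funext => k; congr (_ *: _).
have /(commrX k) : GRing.comm G X by rewrite /GRing.comm -!mulmxE.
by rewrite /GRing.comm -!mulmxE.
Qed.

Lemma sinhmxN X : sinhmx (- X) = - sinhmx X.
Proof. by rewrite /sinhmx opprK -scalerN opprB. Qed.

Lemma coshmxN X : coshmx (- X) = coshmx X.
Proof. by rewrite /coshmx opprK addrC. Qed.

Lemma tanhmxN X : tanhmx (- X) = - tanhmx X.
Proof. by rewrite /tanhmx sinhmxN coshmxN mulNmx. Qed.

Lemma comm_sinhmx {G X} : G *m X = X *m G -> G *m sinhmx X = sinhmx X *m G.
Proof.
move=> GX; have GNX : G *m (- X) = (- X) *m G by rewrite mulmxN mulNmx GX.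
by rewrite /sinhmx -scalemxAr -scalemxAl mulmxBr mulmxBl !comm_expmx.
Qed.

Lemma comm_coshmx {G X} : G *m X = X *m G -> G *m coshmx X = coshmx X *m G.
Proof.
move=> GX; have GNX : G *m (- X) = (- X) *m G by rewrite mulmxN mulNmx GX.
by rewrite /coshmx -scalemxAr -scalemxAl mulmxDr mulmxDl !comm_expmx.
Qed.

Lemma comm_invmx {A B} : A *m B = B *m A -> invmx A *m B = B *m invmx A.
Proof.
move=> AB; have [Au|/invmx_out->//] := boolP (A \in unitmx).
by rewrite -[LHS]mulmx1 -(mulmxV Au) !mulmxA -(mulmxA _ B) -AB mulmxA mulVmx// mul1mx.
Qed.

Lemma comm_tanhmx {G X} : G *m X = X *m G -> G *m tanhmx X = tanhmx X *m G.
Proof.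
move=> GX; rewrite /tanhmx mulmxA comm_sinhmx// -!mulmxA; congr (_ *m _).
by rewrite (comm_invmx (esym (comm_coshmx GX))).
Qed.

Lemma coshmx_sinhmx_comm X : coshmx X *m sinhmx X = sinhmx X *m coshmx X.
Proof. exact/comm_sinhmx/esym/comm_coshmx. Qed.

Lemma trmx_sinhmx X : (sinhmx X)^T = sinhmx X^T.
Proof. by rewrite /sinhmx linearZ/= linearB/= !trmx_expmx linearN. Qed.

Lemma trmx_coshmx X : (coshmx X)^T = coshmx X^T.
Proof. by rewrite /coshmx linearZ/= linearD/= !trmx_expmx linearN. Qed.

Lemma trmx_tanhmx X : (tanhmx X)^T = tanhmx X^T.
Proof.
rewrite /tanhmx trmx_mul trmx_inv trmx_sinhmx trmx_coshmx.
exact/comm_invmx/coshmx_sinhmx_comm.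
Qed.

Lemma invmxN A : invmx (- A) = - invmx A.
Proof.
have [Au|nAu] := boolP (A \in unitmx).
  have NAu : - A \in unitmx by rewrite -scaleN1r unitmxZ ?unitrN1.
  rewrite -[LHS]mulmx1 -(mulmxV Au).
  have -> : A *m invmx A = (- A) *m (- invmx A) by rewrite mulNmx mulmxN opprK.
  by rewrite mulmxA mulVmx// mul1mx.
by rewrite !invmx_out ?inE// -scaleN1r unitmxZ ?unitrN1.
Qed.

Section Conjugation.
Variables P Q : 'M[R]_n.
Hypotheses (PQ : P *m Q = 1%:M) (QP : Q *m P = 1%:M).

Lemma invmx_conj A : invmx (P *m A *m Q) = P *m invmx A *m Q.
Proof.
have [Pu Qu] := mulmx1_unit PQ.
have [Au|nAu] := boolP (A \in unitmx); last first.
  by rewrite !invmx_out// inE !unitmx_mul Pu Qu andbT.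
have PAQu : P *m A *m Q \in unitmx by rewrite !unitmx_mul Pu Au Qu.
rewrite -[LHS]mulmx1 -PQ.
have -> : P *m Q = P *m A *m Q *m (P *m invmx A *m Q).
  by rewrite !mulmxA -(mulmxA _ Q P) QP mulmx1 mulmxK.
by rewrite mulKmx.
Qed.

Lemma expmx_conj X : P *m expmx X *m Q = expmx (P *m X *m Q).
Proof.
apply: (expmx_linear_morph
  ((mulmxr Q : {linear 'M[R]_n -> 'M[R]_n}) \o (mulmx P : {linear 'M[R]_n -> 'M[R]_n}))).
elim=> [|k IH] /=; first by rewrite !expr0 mulmx1 PQ.
by rewrite exprS [in RHS]exprS -!mulmxE -IH !mulmxA -(mulmxA _ Q P) QP mulmx1.
Qed.

Lemma sinhmx_conj X : P *m sinhmx X *m Q = sinhmx (P *m X *m Q).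
Proof.
by rewrite /sinhmx -scalemxAr -scalemxAl mulmxBr mulmxBl !expmx_conj mulmxN mulNmx.
Qed.

Lemma coshmx_conj X : P *m coshmx X *m Q = coshmx (P *m X *m Q).
Proof.
by rewrite /coshmx -scalemxAr -scalemxAl mulmxDr mulmxDl !expmx_conj mulmxN mulNmx.
Qed.

Lemma tanhmx_conj X : P *m tanhmx X *m Q = tanhmx (P *m X *m Q).
Proof.
rewrite /tanhmx -sinhmx_conj -coshmx_conj invmx_conj.
by rewrite !mulmxA -(mulmxA _ Q P) QP mulmx1.
Qed.

End Conjugation.
End MatrixExponential.

Section TanhQuotient.
Context {R : realType} {n : nat}.
Implicit Types F S A : 'M[R]_n.

(* [theta H ybar h] is [2 *: tanhdivmx (h / 2) (Fprime H ybar)]. *)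
Definition tanhdivmx (c : R) F : 'M[R]_n := invmx F *m tanhmx (c *: F).

Lemma tanhdivmxN c F : tanhdivmx c (- F) = tanhdivmx c F.
Proof. by rewrite /tanhdivmx scalerN tanhmxN invmxN mulNmx mulmxN opprK. Qed.

Lemma trmx_tanhdivmx c F : (tanhdivmx c F)^T = tanhdivmx c F^T.
Proof.
rewrite /tanhdivmx trmx_mul trmx_tanhmx trmx_inv linearZ/=.
apply/esym/comm_invmx/comm_tanhmx.
by rewrite -scalemxAr scalemxAl.
Qed.

Lemma tanhdivmx_conj c F {P Q} : P *m Q = 1%:M -> Q *m P = 1%:M ->
  tanhdivmx c (P *m F *m Q) = P *m tanhdivmx c F *m Q.
Proof.
move=> PQ QP; rewrite /tanhdivmx invmx_conj// scalemxAl scalemxAr.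
by rewrite -tanhmx_conj// !mulmxA -(mulmxA _ Q P) QP mulmx1.
Qed.

Lemma tanhdivmx_skew c {S A : 'M[R]_n} : S^T = - S -> S *m S = - 1%:M -> A^T = A ->
  (tanhdivmx c (S *m A) *m S)^T = - (tanhdivmx c (S *m A) *m S).
Proof.
move=> trS SS trA.
have nSS : (- S) *m S = 1%:M by rewrite mulNmx SS opprK.
have SnS : S *m (- S) = 1%:M by rewrite mulmxN SS opprK.
have trF : (S *m A)^T = (- S) *m (- (S *m A)) *m S.
  by rewrite trmx_mul trA trS !(mulmxN, mulNmx) opprK !mulmxA SS !mulNmx mul1mx.
set T := tanhdivmx c (S *m A).
have trT : T^T = (- S) *m T *m S.
  by rewrite /T trmx_tanhdivmx trF (tanhdivmx_conj _ _ nSS SnS) tanhdivmxN.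
by rewrite trmx_mul trT trS 2!mulmxA mulNmx SnS mulNmx mul1mx mulNmx.
Qed.

End TanhQuotient.

Lemma dot_skew_eq0 {R : numFieldType} {n : nat} (K : 'M[R]_n) (g : 'cV[R]_n) :
  K^T = - K -> \sum_(j < n) g j 0 * (K *m g) j 0 = 0.
Proof.
move=> skewK; set q := \sum_(j < n) _.
have qE : q = (g^T *m (K *m g)) 0 0.
  by rewrite /q mxE; apply: eq_bigr => j _; rewrite !mxE.
have qN : q = - q.
  have : (g^T *m (K *m g))^T = - (g^T *m (K *m g)).
    by rewrite !trmx_mul trmxK skewK mulmxN mulNmx mulmxA.
  by move/matrixP => /(_ 0 0); rewrite [LHS]mxE [RHS]mxE -qE.
apply/eqP; have : q *+ 2 == 0 by rewrite mulr2n {1}qN addNr.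
by rewrite mulrn_eq0.
Qed.

Section Symplectic.
Variables (R : realType) (m : nat).

Lemma trmx_Smx : (Smx R m)^T = - Smx R m.
Proof.
rewrite /Smx tr_block_mx !trmx0 trmx1 opp_block_mx !oppr0 opprK.
by rewrite linearN /= trmx1.
Qed.

Lemma mulmx_Smx_Smx : Smx R m *m Smx R m = - 1%:M.
Proof.
rewrite /Smx mulmx_block !mul0mx !mulmx0 !addr0 !add0r mul1mx mulmx1.
by rewrite (scalar_mx_block m m 1) opp_block_mx oppr0.
Qed.

End Symplectic.

Section DiscreteGradient.
Context {R : realType} {n : nat} (f : 'cV[R]_n -> R).

(* The coordinate increment path from [y] to [y']: [yhat_prev y y' j] is its
   [j]-th point and [yhat y y' j] its [j.+1]-st. *)
Definition coord_path (y y' : 'cV[R]_n) (k : nat) : 'cV[R]_n :=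
  \col_i (if (i < k)%N then y' i 0 else y i 0).

Lemma coord_path0 (y y' : 'cV[R]_n) : coord_path y y' 0 = y.
Proof. by apply/matrixP => i k; rewrite mxE ltn0 (ord1 k). Qed.

Lemma coord_path_end (y y' : 'cV[R]_n) : coord_path y y' n = y'.
Proof. by apply/matrixP => i k; rewrite mxE ltn_ord (ord1 k). Qed.

Lemma coord_dgrad_step (y y' : 'cV[R]_n) (j : 'I_n) :
  coord_dgrad f y y' j 0 * (y' j 0 - y j 0) =
  f (coord_path y y' j.+1) - f (coord_path y y' j).
Proof.
rewrite /coord_dgrad mxE.
have -> : yhat y y' j = coord_path y y' j.+1.
  by apply/matrixP => i k; rewrite !mxE.
case: ifPn => [neq_j|/negPn/eqP eq_j].
  by rewrite divfK// subr_eq0.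
rewrite eq_j subrr mulr0.
suff -> : coord_path y y' j.+1 = coord_path y y' j by rewrite subrr.
apply/matrixP => i k; rewrite !mxE ltnS leq_eqVlt.
by case: (eqVneq (i : nat) j) => [/val_inj->|_] /=; rewrite ?ltnn ?eq_j.
Qed.

Lemma coord_dgrad_dot (y y' : 'cV[R]_n) :
  \sum_(j < n) coord_dgrad f y y' j 0 * (y' j 0 - y j 0) = f y' - f y.
Proof.
under eq_bigr do rewrite coord_dgrad_step.
rewrite -(big_mkord xpredT (fun j => f (coord_path y y' j.+1) - f (coord_path y y' j))).
by rewrite telescope_sumr// coord_path0 coord_path_end.
Qed.

Lemma sym_dgrad_dot (y y' : 'cV[R]_n) :
  \sum_(j < n) sym_dgrad f y y' j 0 * (y' - y) j 0 = f y' - f y.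
Proof.
rewrite (eq_bigr (fun j => 2^-1 * (coord_dgrad f y y' j 0 * (y' j 0 - y j 0))
                         - 2^-1 * (coord_dgrad f y' y j 0 * (y j 0 - y' j 0)))).
  by rewrite sumrB -!mulr_sumr !coord_dgrad_dot; lra.
by move=> j _; rewrite !mxE; ring.
Qed.

End DiscreteGradient.

Section Schwarz.
Local Open Scope classical_set_scope.
Variables (R : realType) (V : normedModType R).

Lemma is_derive_line (g : V -> R) (a w : V) (s : R) :
  derivable g (a + s *: w) w ->
  is_derive s 1 (fun t => g (a + t *: w)) ('D_w g (a + s *: w)).
Proof.
move=> dg.
have E : (fun h : R => h^-1 *: (((fun t => g (a + t *: w)) \o shift s) (h *: 1)
            - g (a + s *: w))) =
         (fun h : R => h^-1 *: ((g \o shift (a + s *: w)) (h *: w) - g (a + s *: w))).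
  apply/funext => h /=; congr (_ *: (g _ - _)).
  rewrite (_ : h%:A = h); last exact: mulr1.
  by rewrite scalerDl addrCA addrA.
by split; rewrite /derivable /derive E.
Qed.

Lemma MVT_origin (phi dphi : R -> R) (t : R) : 0 < t ->
  (forall s : R, is_derive s (1 : R) phi (dphi s)) ->
  exists2 s, 0 < s < t & phi t - phi 0 = t * dphi s.
Proof.
move=> t0 dphiE.
have cphi : {within `[0, t], continuous phi}.
  apply: continuous_subspaceT => s; apply: differentiable_continuous.
  by apply/derivable1_diffP; have [] := dphiE s.
have [s sin ->] := MVT t0 (fun s _ => dphiE s) cphi.
by exists s; [move: sin; rewrite in_itv | rewrite subr0 mulrC].
Qed.

Lemma second_difference_MVT (f : V -> R) (x u v : V) {t : R} : 0 < t ->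
  (forall z, derivable f z u) -> (forall z, derivable ('D_u f) z v) ->
  exists s r, [/\ 0 < s < t, 0 < r < t &
    f (x + t *: v + t *: u) - f (x + t *: u) - f (x + t *: v) + f x =
    t * t * 'D_v ('D_u f) (x + s *: u + r *: v)].
Proof.
move=> t0 df ddf.
pose phi s := f ((x + t *: v) + s *: u) - f (x + s *: u).
pose dphi s := 'D_u f ((x + t *: v) + s *: u) - 'D_u f (x + s *: u).
have [s sin Es] : exists2 s, 0 < s < t & phi t - phi 0 = t * dphi s.
  by apply: (MVT_origin phi dphi t t0) => s'; apply: is_deriveB; exact: is_derive_line.
pose psi r := 'D_u f ((x + s *: u) + r *: v).
pose dpsi r := 'D_v ('D_u f) ((x + s *: u) + r *: v).
have [r rin Er] : exists2 r, 0 < r < t & psi t - psi 0 = t * dpsi r.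
  by apply: (MVT_origin psi dpsi t t0) => r; exact: is_derive_line.
exists s, r; split => //.
have -> : f (x + t *: v + t *: u) - f (x + t *: u) - f (x + t *: v) + f x =
          phi t - phi 0 by rewrite /phi !scale0r !addr0 opprD opprK addrA.
rewrite Es -mulrA -Er; congr (_ * _).
by rewrite /dphi /psi scale0r addr0 addrAC.
Qed.

Lemma norm_shift2_lt (x u v : V) {s r t : R} : 0 < s < t -> 0 < r < t ->
  `|x - (x + s *: u + r *: v)| < t * (`|u| + `|v| + 1).
Proof.
move=> /andP[s0 st] /andP[r0 rt].
rewrite -addrA opprD addrA subrr add0r normrN.
apply: (le_lt_trans (ler_normD _ _)).
rewrite !normrZ !gtr0_norm // mulrDr mulrDr mulr1 -addrA ler_ltD //.
  by rewrite ler_wpM2r // ltW.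
apply: (le_lt_trans (_ : _ <= t * `|v|)); first by rewrite ler_wpM2r // ltW.
by rewrite ltrDl (lt_trans s0 st).
Qed.

Lemma schwarz (f : V -> R) (x u v : V) :
  (forall z, derivable f z u) -> (forall z, derivable f z v) ->
  (forall z, derivable ('D_u f) z v) -> (forall z, derivable ('D_v f) z u) ->
  {for x, continuous ('D_v ('D_u f))} -> {for x, continuous ('D_u ('D_v f))} ->
  'D_v ('D_u f) x = 'D_u ('D_v f) x.
Proof.
move=> dfu dfv dduv ddvu c1 c2.
set a := 'D_v ('D_u f) x; set b := 'D_u ('D_v f) x.
apply/eqP/negPn/negP => neq_ab.
have e0 : 0 < `|a - b| / 2 by rewrite divr_gt0 // normr_gt0 subr_eq0.
set e := `|a - b| / 2 in e0.
have N1 : \forall z \near x, `|a - 'D_v ('D_u f) z| < e.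
  exact: (cvgr_dist_lt _ _ c1).
have N2 : \forall z \near x, `|b - 'D_u ('D_v f) z| < e.
  exact: (cvgr_dist_lt _ _ c2).
have [d /= d0 Hd] := (nbhs_normP _ _).1 (filterI N1 N2).
set K := `|u| + `|v| + 1.
have K0 : 0 < K by rewrite ltr_wpDl // addr_ge0.
pose t := d / K.
have t0 : 0 < t by rewrite divr_gt0.
have tK : t * K = d by rewrite /t divfK // gt_eqF.
have [s1 [r1 [s1t r1t E1]]] := second_difference_MVT f x u v t0 dfu dduv.
have [s2 [r2 [s2t r2t E2]]] := second_difference_MVT f x v u t0 dfv ddvu.
have E : 'D_v ('D_u f) (x + s1 *: u + r1 *: v) = 'D_u ('D_v f) (x + s2 *: v + r2 *: u).
  apply: (mulfI (_ : t * t != 0)); first by rewrite mulf_neq0 // gt_eqF.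
  apply: etrans (esym E1) (etrans _ E2).
  by rewrite [x + t *: u + _]addrAC; congr (_ + _); exact: addrAC.
have := norm_shift2_lt x u v s1t r1t; rewrite -/K tK => /Hd [H1 _].
have := norm_shift2_lt x v u s2t r2t; rewrite (addrC `|v| `|u|) -/K tK => /Hd [_ H2].
have : `|a - b| < e + e.
  have -> : a - b = (a - 'D_v ('D_u f) (x + s1 *: u + r1 *: v)) +
                    ('D_u ('D_v f) (x + s2 *: v + r2 *: u) - b).
    by rewrite -E addrA subrK.
  apply: (le_lt_trans (ler_normD _ _)); apply: ltrD; first exact: H1.
  by rewrite distrC.
by rewrite /e -splitr ltxx.
Qed.

End Schwarz.

Lemma hessian_sym {R : realType} {n : nat} (f : 'cV[R]_n -> R) (x : 'cV[R]_n) :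
  smooth f -> (hessian f x)^T = hessian f x.
Proof.
move=> sm; apply/matrixP => i j; rewrite !mxE.
have dd vs z v : derivable (dderiv vs f) z v by exact: diff_derivable (sm vs z).
apply: schwarz => [z|z|z|z||].
- exact: (dd [::]).
- exact: (dd [::]).
- exact: (dd [:: _]).
- exact: (dd [:: _]).
- exact: differentiable_continuous (sm [:: _; _] x).
- exact: differentiable_continuous (sm [:: _; _] x).
Qed.

Lemma theta_Smx_skew (R : realType) (m : nat) (H : 'cV[R]_(m + m) -> R)
    (ybar : 'cV[R]_(m + m)) (h : R) :
  smooth H -> (theta H ybar h *m Smx R m)^T = - (theta H ybar h *m Smx R m).
Proof.
move=> sm; rewrite -scalemxAl linearZ/= -scalerN; congr (_ *: _).
exact: (tanhdivmx_skew (h / 2) (trmx_Smx R m) (mulmx_Smx_Smx R m) (hessian_sym H ybar sm)).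
Qed.

Theorem proposition6p9 (R : realType) (m : nat)
  (H : 'cV[R]_(m + m) -> R) (ybar : 'cV[R]_(m + m)) (h : R)
  (yn yn1 : 'cV[R]_(m + m)) :
  smooth H ->
  Fprime H ybar \in unitmx ->
  coshmx ((h / 2) *: Fprime H ybar) \in unitmx ->
  yn1 - yn = theta H ybar h *m @Smx R m *m sym_dgrad H yn yn1 ->
  H yn1 = H yn.
Proof.
move=> sm _ _ step; apply/eqP; rewrite -subr_eq0.
by rewrite -(sym_dgrad_dot H yn yn1) step dot_skew_eq0 // theta_Smx_skew.
Qed.
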